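(* Let $b>a>0$. Let $\mathcal G$ be the set of measurable $g:\mathbb{R}_+\to\mathbb{R}_+$ with $g(s)\le 1/s$ for a.e. $s>0$, and for $g\in\mathcal G$ set $I_a(g)=\int_0^\infty g^{1+a}$, $I_b(g)=\int_0^\infty g^{1+b}$, $\mathcal G_b=\{g\in\mathcal G:0<I_b(g)<\infty\}$. Then $$\sup\{I_b(g)^{-a/b}I_a(g):g\in\mathcal G_b\}=\frac{a+1}{a}\Big[\frac{b}{b+1}\Big]^{a/b},$$ and the supremum is attained at $g(s)=\min\{k,1/s\}$ for any $k>0$. *)

From HB Require Import structures.
From mathcomp Require Import all_boot all_order all_algebra.
From mathcomp Require Import all_classical all_reals all_analysis.
Set Implicit Arguments. Unset Strict Implicit. Unset Printing Implicit Defensive.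
Import Order.TTheory GRing.Theory Num.Theory.
Local Open Scope classical_set_scope.
Local Open Scope ring_scope.

Definition Rplus (R : realType) : set R := `[0%R, +oo[%classic.

Definition Gclass (R : realType) (g : R -> R) : Prop :=
  measurable_fun (@Rplus R) g /\
  (forall s : R, 0 <= s -> 0 <= g s) /\
  {ae (@lebesgue_measure R), forall s : R, 0 < s -> g s <= s^-1}.

Definition Iexp (R : realType) (p : R) (g : R -> R) : \bar R :=
  (\int[@lebesgue_measure R]_(s in @Rplus R) ((g s) `^ (1 + p))%:E)%E.

Definition Gclass_b (R : realType) (b : R) (g : R -> R) : Prop :=
  Gclass g /\ (0 < Iexp b g)%E /\ (Iexp b g < +oo)%E.

Definition Jratio (R : realType) (a b : R) (g : R -> R) : \bar R :=
  ((fine (Iexp b g) `^ (- (a / b)))%:E * Iexp a g)%E.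

Definition gmin (R : realType) (k : R) : R -> R := fun s => Num.min k s^-1.

From HB Require Import structures.
From mathcomp Require Import all_boot all_order all_algebra.
From mathcomp Require Import all_classical all_reals all_analysis.
From mathcomp Require Import ring lra measurable_realfun.
Import Order.TTheory GRing.Theory Num.Theory.
Import numFieldTopology.Exports numFieldNormedType.Exports.
Local Open Scope classical_set_scope.
Local Open Scope ring_scope.

(* For k > 0 and mu_k = (1+a)/(1+b) k^(a-b), the function t |-> t^(1+a) - mu_k t^(1+b)
   increases on [0, k] and is maximal at k, so on [0, 1/s] it is maximal at
   min(k, 1/s) = g_k(s).  Integrating this pointwise bound gives
   I_a(g) - mu_k I_b(g) <= I_a(g_k) - mu_k I_b(g_k) for every g in G.  Choosing k with
   I_b(g_k) = I_b(g) yields I_a(g) <= I_a(g_k), so the ratio of g is at most that of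
   g_k, which is explicit and independent of k. *)

Section power_profile.
Context {R : realType}.
Implicit Types t u v k x : R.

Lemma powR_le_affine {x th : R} : 0 <= x -> 0 < th -> th < 1 ->
  x `^ th <= th * x + (1 - th).
Proof.
move=> x0 th0 th1.
have th1' : 0 < 1 - th by lra.
have := @conjugate_powR R (x `^ th) 1 th^-1 (1 - th)^-1 (powR_ge0 _ _) ler01.
rewrite !invr_gt0 th0 th1' !invrK addrC subrK => /(_ isT isT erefl).
by rewrite mulr1 -powRrM mulfV ?gt_eqF // powRr1 // powR1 mulrC mul1r.
Qed.

Lemma powRV u (r : R) : 0 < u -> u^-1 `^ r = (u `^ r)^-1.
Proof.
move=> u0; apply: (@mulfI _ (u `^ r)); first by rewrite gt_eqF ?powR_gt0.
by rewrite -powRM ?invr_ge0 ?ltW // !mulfV ?gt_eqF ?powR_gt0 ?powR1.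
Qed.

Variables p q : R.
Hypotheses (p_gt0 : 0 < p) (p_lt_q : p < q).

Let q_gt0 : 0 < q := lt_trans p_gt0 p_lt_q.

(* The Lagrange multiplier for which k maximizes [t |-> t^p - multiplier k * t^q]
   on [0, +oo). *)
Definition multiplier k := p / q * (k `^ p / k `^ q).

Definition profile k t := t `^ p - multiplier k * t `^ q.

Lemma profile_le_at {u t} : 0 <= t -> 0 < u -> profile u t <= profile u u.
Proof.
move=> t0 u0.
have th0 : 0 < p / q by rewrite divr_gt0.
have th1 : p / q < 1 by rewrite ltr_pdivrMr // mul1r.
have := powR_le_affine (powR_ge0 (t / u) q) th0 th1.
rewrite -powRrM (mulrC q) divfK ?gt_eqF // !powRM ?invr_ge0 ?(ltW u0) // !powRV //.
have Up : 0 < u `^ p by rewrite powR_gt0.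
have Uq : 0 < u `^ q by rewrite powR_gt0.
rewrite -!/(_ / _) ler_pdivrMr // /profile /multiplier.
set Tp := t `^ p; set Tq := t `^ q; set Vp := u `^ p; set Vq := u `^ q => h.
have <- : (p / q * (Tq / Vq) + (1 - p / q)) * Vp - p / q * (Vp / Vq) * Tq
          = Vp - p / q * (Vp / Vq) * Vq by field; rewrite !gt_eqF.
by rewrite lerD2r.
Qed.

Lemma multiplier_le u k : 0 < u -> u <= k -> multiplier k <= multiplier u.
Proof.
move=> u0 uk; have k0 : 0 < k by apply: lt_le_trans uk.
have E x : 0 < x -> x `^ p / x `^ q = (x `^ (q - p))^-1.
  move=> x0; rewrite -powRB ?(gt_eqF x0) ?implybT // -powRN.
  by congr (_ `^ _); ring.
rewrite /multiplier ler_pM2l ?divr_gt0 //.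
rewrite !E // lef_pV2 ?posrE ?powR_gt0 //.
by apply: ge0_ler_powR; rewrite ?nnegrE ?subr_ge0 ?(ltW p_lt_q) ?(ltW u0) ?(ltW k0).
Qed.

Lemma profile_le_min k v t : 0 < k -> 0 < v -> 0 <= t -> t <= v ->
  profile k t <= profile k (Num.min k v).
Proof.
move=> k0 v0 t0 tv; have [kv|vk] := leP k v.
  exact: profile_le_at.
have le_v := profile_le_at t0 v0.
have d : 0 <= (multiplier v - multiplier k) * (v `^ q - t `^ q).
  rewrite mulr_ge0 // subr_ge0; first exact: multiplier_le (ltW vk).
  by apply: ge0_ler_powR; rewrite ?nnegrE ?(ltW q_gt0) ?(ltW v0).
move: le_v d; rewrite /profile; nra.
Qed.

End power_profile.

Section integrals_on_Rplus.
Context {R : realType}.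
Local Notation mu := (@lebesgue_measure R).

Lemma measurable_Rplus : measurable (@Rplus R).
Proof. exact: measurable_itv. Qed.

Lemma gmin_ge0 (k s : R) : 0 < k -> 0 <= s -> 0 <= gmin k s.
Proof. by move=> k0 s0; rewrite /gmin le_min (ltW k0) invr_ge0. Qed.

Lemma measurable_gmin (k : R) : measurable_fun (@Rplus R) (gmin k).
Proof.
apply/(measurable_fun_itv_obnd_cbndP 0 +oo%O (gmin k)).
apply: measurable_minr; first exact: measurable_cst.
apply: open_continuous_measurable_fun; first exact: interval_open.
move=> x; rewrite inE /= in_itv /= andbT => x0.
by apply: inv_continuous; rewrite gt_eqF.
Qed.

Lemma ae_neq0 : {ae mu, forall s : R, s != 0}.
Proof.
exists [set 0]; split => //; first exact: lebesgue_measure_set1.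
by move=> x /= /negP; rewrite negbK => /eqP.
Qed.

Lemma measurable_powR_comp (r : R) {f : R -> R} :
  measurable_fun (@Rplus R) f -> measurable_fun (@Rplus R) (fun s => f s `^ r).
Proof. exact: (measurableT_comp (measurable_powR r)). Qed.

Lemma Iexp_lincomb (p q c : R) (f h : R -> R) : 0 <= c ->
  measurable_fun (@Rplus R) f -> measurable_fun (@Rplus R) h ->
  (\int[mu]_(s in @Rplus R) (f s `^ (1 + p) + c * h s `^ (1 + q))%:E =
   Iexp p f + c%:E * Iexp q h)%E.
Proof.
move=> c0 mf mh; have mfp := measurable_powR_comp (1 + p) mf.
have mhq := measurable_powR_comp (1 + q) mh.
under eq_integral do rewrite EFinD EFinM.
rewrite ge0_integralD //.
- rewrite ge0_integralZl //; first exact: measurable_Rplus.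
  + exact/measurable_EFinP.
  + by move=> x _; rewrite lee_fin powR_ge0.
- exact: measurable_Rplus.
- by move=> x _; rewrite lee_fin powR_ge0.
- exact/measurable_EFinP.
- by move=> x _; rewrite lee_fin mulr_ge0 ?powR_ge0.
- by apply/measurable_EFinP; exact: measurable_funM.
Qed.

Lemma Iexp_compare {a b k : R} {g : R -> R} : 0 < a -> a < b -> 0 < k ->
  Gclass g ->
  (Iexp a g + (multiplier (1 + a) (1 + b) k)%:E * Iexp b (gmin k) <=
   Iexp a (gmin k) + (multiplier (1 + a) (1 + b) k)%:E * Iexp b g)%E.
Proof.
move=> a0 ab k0 [mg [g0 g_le]]; set m := multiplier _ _ k.
have m0 : 0 <= m.
  by rewrite mulr_ge0 ?divr_ge0 ?powR_ge0 //; lra.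
rewrite -!Iexp_lincomb //; try exact: measurable_gmin.
apply: ae_ge0_le_integral => //.
- exact: measurable_Rplus.
- by move=> x _; rewrite lee_fin addr_ge0 ?(mulr_ge0 m0) ?powR_ge0.
- apply/measurable_EFinP; apply: measurable_funD; first exact: measurable_powR_comp.
  by apply: measurable_funM => //; exact: measurable_powR_comp (measurable_gmin k).
- by move=> x _; rewrite lee_fin addr_ge0 ?(mulr_ge0 m0) ?powR_ge0.
- apply/measurable_EFinP; apply: measurable_funD.
    exact: measurable_powR_comp (measurable_gmin k).
  by apply: measurable_funM => //; exact: measurable_powR_comp.
have ae_filter := ae_filter_ringOfSetsType mu.
apply: (filterS2 _ _ g_le ae_neq0) => s gs s_neq0.
rewrite /Rplus /= in_itv /= andbT => s_ge0.
have s0 : 0 < s by rewrite lt_def s_neq0.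
have pa : 0 < 1 + a by lra.
have pb : 1 + a < 1 + b by lra.
have s_inv : 0 < s^-1 by rewrite invr_gt0.
have := profile_le_min _ _ pa pb _ _ _ k0 s_inv (g0 s s_ge0) (gs s0).
rewrite lee_fin /profile -/m; lra.
Qed.

Lemma powRN_cvgy (p : R) : 0 < p -> x `^ (- p) @[x --> +oo] --> (0 : R).
Proof.
move=> p0; apply/cvgrPdist_lt => e e0.
set M := e `^ (- p^-1).
have M0 : 0 < M by rewrite powR_gt0.
near=> x.
have Mx : M < x by near: x; apply: nbhs_pinfty_gt; exact: num_real.
have x0 : 0 < x by apply: lt_trans Mx.
rewrite sub0r normrN ger0_norm ?powR_ge0 //.
have -> : e = M `^ (- p) by rewrite -powRrM mulrNN mulVf ?gt_eqF // powRr1 // ltW.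
rewrite !powRN ltf_pV2 ?posrE ?powR_gt0 //.
by apply: gt0_ltr_powR; rewrite ?nnegrE ?ltW.
Unshelve. all: by end_near.
Qed.

Lemma is_derive_powRN {p x : R} : 0 < p -> 0 < x ->
  is_derive x 1 (fun y => - p^-1 * y `^ (- p)) (x `^ (- (1 + p))).
Proof.
move=> p0 x0.
have := is_deriveZ (- p^-1) (is_derive1_powR (- p) x0).
suff -> : x `^ (- (1 + p)) = - p^-1 *: (- p * x `^ (- p - 1)) by [].
rewrite /GRing.scale /= mulrA mulrNN mulVf ?gt_eqF // mul1r.
by congr (_ `^ _); ring.
Qed.

Lemma integral_powRN_itvcy (p c : R) : 0 < p -> 0 < c ->
  (\int[mu]_(x in `[c, +oo[) (x `^ (- (1 + p)))%:E = (c `^ (- p) / p)%:E)%E.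
Proof.
move=> p0 c0; pose F (y : R) := - p^-1 * y `^ (- p).
rewrite (@ge0_continuous_FTC2y R _ F c 0).
- by rewrite sub0e -EFinN /F mulNr opprK mulrC.
- by move=> x _; exact: powR_ge0.
- apply: derivable_within_continuous => x; rewrite in_itv /= andbT => cx.
  by apply: derivable_powR; rewrite in_itv /= andbT (lt_le_trans c0).
- rewrite -(mulr0 (- p^-1)); apply: cvgM; first exact: cvg_cst.
  exact: powRN_cvgy.
- by move=> x cx; case: (is_derive_powRN p0 (lt_trans c0 cx)).
- apply: cvg_at_right_filter; apply: differentiable_continuous.
  by apply/derivable1_diffP; case: (is_derive_powRN p0 c0).
- move=> x; rewrite in_itv /= andbT => cx.
  by rewrite derive1E; have [_ ->] := is_derive_powRN p0 (lt_trans c0 cx).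
Qed.

Lemma Iexp_gmin (p k : R) : 0 < p -> 0 < k ->
  Iexp p (gmin k) = (k `^ p * ((p + 1) / p))%:E.
Proof.
move=> p0 k0; have k'0 : 0 < k^-1 by rewrite invr_gt0.
have mf := measurable_powR_comp (1 + p) (measurable_gmin k).
have Rplus_split : @Rplus R = `[0, k^-1[ `|` `[k^-1, +oo[.
  by apply: itv_bndbnd_setU; rewrite bnd_simp //; exact: ltW.
rewrite /Iexp Rplus_split ge0_integral_setU //; first last.
- apply: lt_disjoint => x y; rewrite !in_itv /= andbT => /andP[_ xk] ky.
  exact: lt_le_trans xk ky.
- by move=> x _; rewrite lee_fin powR_ge0.
- by rewrite -Rplus_split; apply/measurable_EFinP.
(* On the head interval [gmin k] is the constant [k], except at [0] where [0^-1 = 0]. *)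
have -> : (\int[mu]_(x in `[0%R, k^-1%R[) (gmin k x `^ (1 + p))%:E =
           (k `^ (1 + p) * k^-1)%R%:E)%E.
  rewrite -integral_itv_obnd_cbnd; last first.
    apply/measurable_EFinP; apply: measurable_funS mf; first exact: measurable_Rplus.
    by move=> x /=; rewrite /Rplus /= !in_itv /= andbT => /andP[/ltW].
  under eq_integral => x /[!inE] /= /[!in_itv] /= /andP[x0 xk].
    rewrite /gmin min_l; last by rewrite ltW // -(invrK k) ltf_pV2.
  over.
  by rewrite integral_cst //= lebesgue_measure_itv /= lte_fin k'0 sube0.
have -> : (\int[mu]_(x in `[k^-1%R, +oo[) (gmin k x `^ (1 + p))%:E =
           (k `^ p / p)%R%:E)%E.
  have -> : k `^ p = k^-1 `^ (- p) by rewrite powRN powRV // invrK.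
  rewrite -integral_powRN_itvcy //.
  apply: eq_integral => x /[!inE] /= /[!in_itv] /= /[!andbT] kx.
  have x0 : 0 < x by apply: lt_le_trans kx.
  rewrite /gmin min_r; last by rewrite -(invrK k) lef_pV2.
  by rewrite powRV // powRN.
rewrite -EFinD powRD ?(gt_eqF k0) ?implybT // powRr1 ?(ltW k0) //.
by congr EFin; field; rewrite !gt_eqF.
Qed.

Lemma Gclass_b_gmin (b k : R) : 0 < b -> 0 < k -> Gclass_b b (gmin k).
Proof.
move=> b0 k0; split; [split; [exact: measurable_gmin | split] | ].
- by move=> s; exact: gmin_ge0.
- by apply: aeW => s _; rewrite /gmin ge_min lexx orbT.
- rewrite Iexp_gmin //; split; last exact: ltry.
  by rewrite lte_fin mulr_gt0 ?powR_gt0 ?divr_gt0 ?ltr_wpDr.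
Qed.

Lemma Iexp_gmin_onto (b : R) (x : \bar R) : 0 < b -> (0 < x < +oo)%E ->
  exists2 k, 0 < k & Iexp b (gmin k) = x.
Proof.
case: x => [B | |] // b0 /andP[B0 B_lt]; last by rewrite ltxx in B_lt.
move: B0; rewrite lte_fin => B0.
have c0 : 0 < B * (b / (b + 1)) by rewrite mulr_gt0 ?divr_gt0 ?ltr_wpDr.
exists ((B * (b / (b + 1))) `^ b^-1); first exact: powR_gt0.
rewrite Iexp_gmin ?powR_gt0 // -powRrM mulVf ?gt_eqF // powRr1 ?ltW //.
by congr EFin; field; rewrite !gt_eqF ?ltr_wpDr.
Qed.

Lemma Jratio_gmin {a b k : R} : 0 < a -> a < b -> 0 < k ->
  Jratio a b (gmin k) = ((a + 1) / a * (b / (b + 1)) `^ (a / b))%:E.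
Proof.
move=> a0 ab k0; have b0 : 0 < b by apply: lt_trans ab.
rewrite /Jratio !Iexp_gmin //= -EFinM; congr EFin.
rewrite powRM ?powR_ge0 ?divr_ge0 ?ltW ?ltr_wpDr // -powRrM.
rewrite (_ : b * - (a / b) = - a); last by field; rewrite gt_eqF.
rewrite -(invf_div (b + 1) b) powRV ?divr_gt0 ?ltr_wpDr // !powRN.
by field; rewrite !gt_eqF ?powR_gt0 ?divr_gt0 ?ltr_wpDr.
Qed.

Lemma Jratio_le_gmin (a b k : R) (g : R -> R) : 0 < a -> a < b -> 0 < k ->
  Gclass_b b g -> Iexp b (gmin k) = Iexp b g ->
  (Jratio a b g <= Jratio a b (gmin k))%E.
Proof.
move=> a0 ab k0 [Gg [Ib_gt0 Ib_fin]] Ik.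
have Ib_finnum : Iexp b g \is a fin_num by rewrite ge0_fin_numE ?ltW.
have := Iexp_compare a0 ab k0 Gg.
rewrite Ik leeD2rE => [Ia_le|]; last exact: fin_numM.
rewrite /Jratio Ik; apply: lee_pmul => //; first by rewrite lee_fin powR_ge0.
by apply: integral_ge0 => s _; rewrite lee_fin powR_ge0.
Qed.

End integrals_on_Rplus.

Theorem mainTheorem4 (R : realType) (a b : R) (ha : 0 < a) (hab : a < b) :
  ereal_sup [set Jratio a b g | g in Gclass_b b] =
    ((a + 1) / a * (b / (b + 1)) `^ (a / b))%:E /\
  (forall k : R, 0 < k ->
     Gclass_b b (gmin k) /\
     Jratio a b (gmin k) = ((a + 1) / a * (b / (b + 1)) `^ (a / b))%:E).
Proof.
have hb : 0 < b := lt_trans ha hab.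
split; last by move=> k k0; split; [exact: Gclass_b_gmin | exact: Jratio_gmin].
apply/le_anti/andP; split.
- apply: ge_ereal_sup => _ [g Gg <-].
  have [k k0 Ik] : exists2 k, 0 < k & Iexp b (gmin k) = Iexp b g.
    by case: Gg => _ [Ib_gt0 Ib_fin]; apply: Iexp_gmin_onto; rewrite ?Ib_gt0 ?Ib_fin.
  by rewrite -(Jratio_gmin ha hab k0); exact: Jratio_le_gmin.
- rewrite -(Jratio_gmin ha hab ltr01); apply: ereal_sup_ubound.
  by exists (gmin 1) => //; exact: Gclass_b_gmin.
Qed.
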